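(* Let $(B,B^* )$ be a couple of sequence spaces (a Banach sequence space $B$ and its dual realized as a sequence space) such that the complex interpolation space $(B,B^* )_{1/2}=\ell_2$, and let $\Omega$ be the corresponding derivation. Then for each finite set $F\subseteq\mathbb N$ there is a nonzero $b_*\in[e_j]_{j\in F}$ such that $$\Omega(b_* )=-2\,b_*\cdot\log\kappa(F),\qquad\text{where } \kappa(F)=\sup\{\|b\|_{\ell_2}:\ \|b\|_B=1,\ \operatorname{supp}b\subseteq F\}.$$
   Context: Complex interpolation (Kalton–Montgomery-Smith): for a compatible couple $(B_0,B_1)$, $\mathcal F_\infty(B_0,B_1)$ is the Calderón space of bounded continuous functions $f$ on the strip $\{0\le\operatorname{Re}z\le1\}$, analytic in the interior, with values in $B_0+B_1$, $f(it)\in B_0$, $f(1+it)\in B_1$, normed by $\max\{\sup_t\|f(it)\|_{B_0},\sup_t\|f(1+it)\|_{B_1}\}$. $(B_0,B_1)_\theta=\{f(\theta)\}$ with the quotient norm; $\delta_\theta f=f(\theta)$. The derivation is $\Omega=\delta'_\theta S$, i.e. $\Omega(b)=(S(b))'(\theta)$, where $S$ is a bounded selector ($\delta_\theta S(b)=b$, $\|S(b)\|\le C\|b\|$). $[e_j]_{j\in F}$ is the span of the unit vectors indexed by $F$. *)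

From HB Require Import structures.
From mathcomp Require Import all_boot all_order all_algebra.
From mathcomp Require Import all_classical all_reals.
From mathcomp Require Import ereal sequences exp.
From mathcomp Require Import complex.

Set Implicit Arguments.
Unset Strict Implicit.
Unset Printing Implicit Defensive.

Import Order.TTheory GRing.Theory Num.Theory.
Local Open Scope ring_scope.
Local Open Scope classical_set_scope.

Section Interp.
Variable R : realType.

Definition cplx := R[i].
Definition cseq := nat -> cplx.

Definition cmod (z : cplx) : R := ComplexField.Normc.normc z.
Definition rC (r : R) : cplx := Complex r 0.

Definition sadd (x y : cseq) : cseq := fun j => x j + y j.
Definition ssub (x y : cseq) : cseq := fun j => x j - y j.
Definition sscale (a : cplx) (x : cseq) : cseq := fun j => a * x j.
Definition szero : cseq := fun _ => 0.
Definition unit_vec (k : nat) : cseq := fun j => if j == k then 1 else 0.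

Definition supported (F : set nat) (b : cseq) : Prop :=
  forall j, ~ F j -> b j = 0.

(* A Banach sequence space is given by its (extended) norm N : cseq -> \bar R,
   the space being { x | N x < +oo }. *)
Definition bss_definite (N : cseq -> \bar R) : Prop :=
  forall x, N x = 0%E <-> x = szero.
Definition bss_homogeneous (N : cseq -> \bar R) : Prop :=
  forall a x, N (sscale a x) = ((cmod a)%:E * N x)%E.
Definition bss_triangle (N : cseq -> \bar R) : Prop :=
  forall x y, (N (sadd x y) <= N x + N y)%E.
Definition bss_ideal (N : cseq -> \bar R) : Prop :=
  forall x y : cseq, (forall j, cmod (x j) <= cmod (y j)) -> (N x <= N y)%E.
Definition bss_units (N : cseq -> \bar R) : Prop :=
  forall k, (N (unit_vec k) < +oo)%E.
Definition bss_complete (N : cseq -> \bar R) : Prop :=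
  forall u : nat -> cseq, (forall n, (N (u n) < +oo)%E) ->
    (forall e : R, 0 < e -> exists M : nat, forall m n, (M <= m)%N -> (M <= n)%N ->
        (N (ssub (u m) (u n)) <= e%:E)%E) ->
    exists x, (N x < +oo)%E /\
      forall e : R, 0 < e -> exists M : nat, forall n, (M <= n)%N ->
        (N (ssub (u n) x) <= e%:E)%E.

Definition banach_seq_space (N : cseq -> \bar R) : Prop :=
  bss_definite N /\ bss_homogeneous N /\ bss_triangle N /\ bss_ideal N /\
  bss_units N /\ bss_complete N.

(* the dual B^* realized as a sequence space (Koethe dual):
   ||y||_{B^*} = sup { sum_j |x_j y_j| : ||x||_B <= 1 } *)
Definition kdual (N : cseq -> \bar R) (y : cseq) : \bar R :=
  ereal_sup [set (\sum_(0 <= j <oo) ((cmod (x j) * cmod (y j))%R%:E))%E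
            | x in [set x | (N x <= 1)%E]].

Definition l2norm (x : cseq) : \bar R :=
  let s := (\sum_(0 <= j <oo) ((cmod (x j) ^+ 2)%R%:E))%E in
  if s == +oo%E then +oo%E else (Num.sqrt (fine s))%:E.

Section Couple.
Variables (N0 N1 : cseq -> \bar R).

Definition sumnorm (x : cseq) : \bar R :=
  ereal_inf [set z | exists x0 x1, x = sadd x0 x1 /\ z = (N0 x0 + N1 x1)%E].

Definition in_strip (z : cplx) : Prop := 0 <= Re z <= 1.
Definition in_open_strip (z : cplx) : Prop := 0 < Re z < 1.

Definition dquot (f : cplx -> cseq) (z0 z : cplx) (g : cseq) : cseq :=
  fun j => (f z j - f z0 j) / (z - z0) - g j.

Definition has_cderiv (f : cplx -> cseq) (z0 : cplx) (g : cseq) : Prop :=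
  forall e : R, 0 < e -> exists d : R, 0 < d /\
    forall z, 0 < cmod (z - z0) < d ->
      (sumnorm (dquot f z0 z g) <= e%:E)%E.

Definition calderon_norm (f : cplx -> cseq) : \bar R :=
  Order.max (ereal_sup [set N0 (f (Complex 0 t)) | t in [set: R]])
            (ereal_sup [set N1 (f (Complex 1 t)) | t in [set: R]]).

Definition calderon (f : cplx -> cseq) : Prop :=
  [/\ (exists M : R, forall z, in_strip z -> (sumnorm (f z) <= M%:E)%E),
      (forall z, in_strip z -> forall e : R, 0 < e -> exists d : R, 0 < d /\
          forall w, in_strip w -> cmod (w - z) < d ->
            (sumnorm (ssub (f w) (f z)) <= e%:E)%E),
      (forall z, in_open_strip z ->
          exists g, (sumnorm g < +oo)%E /\ has_cderiv f z g) &
      (calderon_norm f < +oo)%E].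

(* quotient norm of (B0,B1)_theta (+oo outside the interpolation space) *)
Definition interp_norm (theta : R) (x : cseq) : \bar R :=
  ereal_inf [set calderon_norm f | f in [set f | calderon f /\ f (rC theta) = x]].

End Couple.

Definition kappa (N : cseq -> \bar R) (F : set nat) : R :=
  fine (ereal_sup [set l2norm b | b in [set b | N b = 1%E /\ supported F b]]).

End Interp.

(* Since F is finite, the unit sphere of B inside [e_j]_{j in F} is compact, so
   some b with ||b||_B = 1 attains kappa = kappa(F) = ||b||_2.  Maximality gives
   ||x_F||_2 <= kappa ||x||_B, hence, by AM-GM, sum_j |x_j| |b_j| <= kappa^2 when
   ||x||_B <= 1, i.e. ||b||_{B^*} <= kappa^2.  The curve f(z) = kappa^(1-2z) b
   then has norm kappa on both edges of the strip, and kappa = ||b||_2 is the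
   interpolation norm of b = f(1/2); so f is an optimal extremal for b and
   Omega(b) = f'(1/2) = -2 log kappa * b. *)

From HB Require Import structures.
From mathcomp Require Import all_boot all_order all_algebra.
From mathcomp Require Import all_classical all_reals.
From mathcomp Require Import ereal topology normedtype sequences exp trigo derive.
From mathcomp Require Import complex matrix_normedtype.
From mathcomp Require Import ring lra.

Set Implicit Arguments.
Unset Strict Implicit.
Unset Printing Implicit Defensive.

Import Order.TTheory GRing.Theory Num.Theory.
Import numFieldNormedType.Exports.
Local Open Scope ring_scope.
Local Open Scope classical_set_scope.

Lemma is_derive_remainder_le (R : realType) (f : R -> R) (x l : R) :
  is_derive x (1 : R) f l -> forall e : R, 0 < e -> exists2 d : R, 0 < d &
    forall h, `|h| < d -> `|f (x + h) - f x - l * h| <= e * `|h|.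
Proof.
move=> [df dfl] e e0.
have : (fun h : R => h^-1 *: ((f \o shift x) (h *: (1 : R)) - f x)) @ 0^' --> l.
  by rewrite -dfl; exact: df.
move/cvgrPdist_le => /(_ e e0) /nbhs_ballP[d /= d0 Hd].
exists d => // h hd.
have [->|h0] := eqVneq h 0; first by rewrite !(addr0, mulr0, subrr, normr0, subr0).
have := Hd h; rewrite /ball /= sub0r normrN => /(_ hd h0).
rewrite -[h%:A]/(h * 1) mulr1 (addrC h x) -[_ *: _]/(_ * _) => H.
have -> : f (x + h) - f x - l * h = - h * (l - h^-1 * (f (x + h) - f x)) by field.
by rewrite normrM normrN mulrC ler_wpM2r.
Qed.

Lemma expcos_expsin_remainder_le (R : realFieldType) (ep u v A C S : R) :
  ep <= 2^-1 -> `|u| <= ep ->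
  `|A - 1 - u| <= ep * `|u| -> `|C - 1| <= ep * `|v| -> `|S - v| <= ep * `|v| ->
  `|A * C - 1 - u| + `|A * S - v| <= 8 * ep * (`|u| + `|v|).
Proof.
move=> ep_le u_le hA hC hS.
have nu := normr_ge0 u; have nv := normr_ge0 v.
have hA1 : `|A - 1| <= 2 * `|u|.
  rewrite (_ : A - 1 = (A - 1 - u) + u); last by ring.
  apply: le_trans (ler_normD _ _) _; nra.
have hA2 : `|A| <= 2.
  rewrite (_ : A = (A - 1) + 1); last by ring.
  apply: le_trans (ler_normD _ _) _; rewrite normr1; lra.
have hS2 : `|S| <= 2 * `|v|.
  rewrite (_ : S = (S - v) + v); last by ring.
  apply: le_trans (ler_normD _ _) _; nra.
have T1 : `|A * C - 1 - u| <= ep * `|u| + 2 * (ep * `|v|).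
  rewrite (_ : A * C - 1 - u = (A - 1 - u) + A * (C - 1)); last by ring.
  apply: le_trans (ler_normD _ _) _; apply: lerD => //.
  by rewrite normrM; apply: ler_pM.
have T2 : `|A * S - v| <= (2 * ep) * (2 * `|v|) + ep * `|v|.
  rewrite (_ : A * S - v = (A - 1) * S + (S - v)); last by ring.
  apply: le_trans (ler_normD _ _) _; apply: lerD => //.
  by rewrite normrM; apply: ler_pM => //; lra.
nra.
Qed.

Lemma strip_exponent_le (R : realFieldType) (a x : R) : 0 <= x <= 1 ->
  - (2 * a) * (x - 2^-1) <= `|a|.
Proof.
move=> /andP[x0 x1].
have h1 : 0 <= (`|a| - a) * (1 - x) by rewrite mulr_ge0 // subr_ge0 ?ler_norm.
have h2 : 0 <= (`|a| + a) * x by rewrite mulr_ge0 // -lerBlDr sub0r -normrN ler_norm.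
have -> : - (2 * a) * (x - 2^-1) = a * (1 - 2 * x) by field.
lra.
Qed.

Section ComplexExp.
Variable R : realType.
Implicit Types (x y : R) (w z h : cplx R).

Lemma cmodE x y : cmod (Complex x y) = Num.sqrt (x ^+ 2 + y ^+ 2).
Proof. by []. Qed.

Lemma cmod_ge0 w : 0 <= cmod w.
Proof. by case: w => x y; rewrite cmodE sqrtr_ge0. Qed.

Lemma cmod0 : cmod (0 : cplx R) = 0.
Proof. exact: ComplexField.Normc.normc0. Qed.

Lemma cmod_eq0 w : cmod w = 0 -> w = 0.
Proof. exact: ComplexField.Normc.eq0_normc. Qed.

Lemma cmodM w z : cmod (w * z) = cmod w * cmod z.
Proof. exact: ComplexField.Normc.normcM. Qed.

Lemma cmodV w : cmod w^-1 = (cmod w)^-1.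
Proof. exact: ComplexField.Normc.normcV. Qed.

Lemma cmodD w z : cmod (w + z) <= cmod w + cmod z.
Proof. exact: le_normcD. Qed.

Lemma cmod_rC x : cmod (rC x) = `|x|.
Proof. by rewrite /rC cmodE expr0n /= addr0 sqrtr_sqr. Qed.

Lemma Re_le_cmod w : `|complex.Re w| <= cmod w.
Proof.
case: w => x y; rewrite cmodE /= -sqrtr_sqr ler_sqrt ?addr_ge0 ?sqr_ge0 //.
by rewrite lerDl sqr_ge0.
Qed.

Lemma Im_le_cmod w : `|complex.Im w| <= cmod w.
Proof.
case: w => x y; rewrite cmodE /= -sqrtr_sqr ler_sqrt ?addr_ge0 ?sqr_ge0 //.
by rewrite lerDr sqr_ge0.
Qed.

Lemma cmod_le_normD x y : cmod (Complex x y) <= `|x| + `|y|.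
Proof.
rewrite cmodE -(@ger0_norm _ (`|x| + `|y|)) ?addr_ge0 // -sqrtr_sqr.
rewrite ler_sqrt ?sqr_ge0 // sqrrD !real_normK ?num_real // mulr2n.
have := mulr_ge0 (normr_ge0 x) (normr_ge0 y); lra.
Qed.

Lemma Re_rCM x w : complex.Re (rC x * w) = x * complex.Re w.
Proof. by case: w => a b; rewrite /= mul0r subr0. Qed.

Lemma in_strip_Re z : in_strip z -> 0 <= complex.Re z <= 1.
Proof.
rewrite /in_strip -complexRe (_ : 0 = (0 : R)%:C%C) // (_ : 1 = (1 : R)%:C%C) //.
by rewrite !lecR.
Qed.

Definition cexp w : cplx R :=
  Complex (expR (complex.Re w) * cos (complex.Im w))
          (expR (complex.Re w) * sin (complex.Im w)).

Lemma cexpD w z : cexp (w + z) = cexp w * cexp z.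
Proof.
case: w => x1 y1; case: z => x2 y2.
rewrite /cexp /= expRD cosD sinD; congr Complex; ring.
Qed.

Lemma cexp0 : cexp 0 = 1.
Proof. by rewrite /cexp /= expR0 cos0 sin0 !mul1r. Qed.

Lemma cmod_cexp w : cmod (cexp w) = expR (complex.Re w).
Proof.
rewrite /cexp cmodE !exprMn -mulrDr cos2Dsin2 mulr1 sqrtr_sqr.
by rewrite gtr0_norm // expR_gt0.
Qed.

Lemma cexp_remainder_le (e : R) : 0 < e -> exists2 d : R, 0 < d &
  forall h, cmod h < d -> cmod (cexp h - 1 - h) <= e * cmod h.
Proof.
move=> e0.
have [ep [ep0 ep_half ep16]] : exists ep : R, [/\ 0 < ep, ep <= 2^-1 & ep * 16 <= e].
  exists (Num.min (e / 16) 2^-1); split; last by rewrite -ler_pdivlMr // ge_min lexx.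
    by rewrite lt_min invr_gt0 ltr0n andbT divr_gt0.
  by rewrite ge_min lexx orbT.
have [d1 d10 H1] := is_derive_remainder_le (is_derive_expR (0 : R)) ep0.
have [d2 d20 H2] := is_derive_remainder_le (is_derive_cos (0 : R)) ep0.
have [d3 d30 H3] := is_derive_remainder_le (is_derive_sin (0 : R)) ep0.
exists (Num.min (Num.min d1 d2) (Num.min d3 ep)).
  by rewrite !lt_min d10 d20 d30 ep0.
case=> u v; rewrite !lt_min => /andP[/andP[hd1 hd2] /andP[hd3 hep]].
have hu : `|u| <= cmod (Complex u v) := Re_le_cmod (Complex u v).
have hv : `|v| <= cmod (Complex u v) := Im_le_cmod (Complex u v).
have hA := H1 u (le_lt_trans hu hd1).
have hC := H2 v (le_lt_trans hv hd2).
have hS := H3 v (le_lt_trans hv hd3).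
rewrite !(add0r, addr0, expR0, sin0, cos0, mul1r, oppr0, mul0r, subr0) in hA hC hS.
have := expcos_expsin_remainder_le ep_half (ltW (le_lt_trans hu hep)) hA hC hS.
have -> : cexp (Complex u v) - 1 - Complex u v =
    Complex (expR u * cos v - 1 - u) (expR u * sin v - v).
  by rewrite /cexp /=; congr Complex; ring.
move=> H; apply: le_trans (cmod_le_normD _ _) _; apply: le_trans H _.
have := cmod_ge0 (Complex u v); nra.
Qed.

Definition is_cderiv (c : cplx R -> cplx R) (z0 d : cplx R) : Prop :=
  forall e : R, 0 < e -> exists2 r : R, 0 < r &
    forall z, 0 < cmod (z - z0) < r -> cmod ((c z - c z0) / (z - z0) - d) <= e.

Lemma is_cderiv_cexp_affine k w0 z :
  is_cderiv (fun z => cexp (k * (z - w0))) z (k * cexp (k * (z - w0))).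
Proof.
move=> e e0; set C := cmod (cexp (k * (z - w0))).
have C0 : 0 <= C := cmod_ge0 _.
have k0 : 0 < cmod k + 1 by rewrite ltr_pwDr // cmod_ge0.
have [d d0 Hd] := cexp_remainder_le (divr_gt0 e0 (mulr_gt0 k0 (ltr_pwDl ltr01 C0))).
exists (d / (cmod k + 1)); first exact: divr_gt0.
move=> w /andP[hw0 hwd]; set h := w - z in hw0 hwd *.
have h0 : h != 0 by apply: contraTneq hw0 => ->; rewrite cmod0 ltxx.
have -> : (cexp (k * (w - w0)) - cexp (k * (z - w0))) / h - k * cexp (k * (z - w0))
    = cexp (k * (z - w0)) * ((cexp (k * h) - 1 - k * h) / h).
  rewrite (_ : k * (w - w0) = k * (z - w0) + k * h); last by rewrite /h; ring.
  by rewrite cexpD; field.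
have khd : cmod (k * h) < d.
  rewrite cmodM; apply: (@le_lt_trans _ _ ((cmod k + 1) * cmod h)).
    by rewrite ler_wpM2r ?cmod_ge0 // lerDl.
  by rewrite mulrC -ltr_pdivlMr.
rewrite !cmodM cmodV -/C.
have e'0 : 0 <= e / ((cmod k + 1) * (1 + C)).
  by rewrite ltW // divr_gt0 // mulr_gt0 // ltr_pwDl.
apply: (@le_trans _ _ ((1 + C) * (e / ((cmod k + 1) * (1 + C)) * (cmod k + 1))));
  last first.
  have C1 : 1 + C != 0 by rewrite gt_eqF // ltr_pwDl.
  by rewrite le_eqVlt; apply/orP; left; apply/eqP; field; rewrite C1 gt_eqF.
set e' := e / _ in e'0 Hd *.
apply: ler_pM => //; [by rewrite divr_ge0 ?cmod_ge0 | by rewrite lerDr |].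
rewrite ler_pdivrMr // -mulrA; apply: le_trans (Hd _ khd) _.
by rewrite cmodM ler_wpM2l // ler_wpM2r ?cmod_ge0 // lerDl.
Qed.

Lemma is_cderiv_lipschitz c z d : is_cderiv c z d ->
  exists2 r : R, 0 < r &
    forall w, cmod (w - z) < r -> cmod (c w - c z) <= (cmod d + 1) * cmod (w - z).
Proof.
move=> /(_ 1 ltr01) [r r0 Hr]; exists r => // w hw.
have [->|wz] := eqVneq w z; first by rewrite !subrr cmod0 mulr0.
have hz : w - z != 0 by rewrite subr_eq0.
have h0 : 0 < cmod (w - z).
  by rewrite lt_neqAle cmod_ge0 andbT eq_sym; apply: contra_neq hz => /cmod_eq0.
have -> : c w - c z = ((c w - c z) / (w - z) - d + d) * (w - z) by field.
rewrite cmodM ler_wpM2r ?cmod_ge0 // addrC; apply: le_trans (cmodD _ _) _.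
by rewrite lerD2l Hr // h0.
Qed.

End ComplexExp.

Section ScaledCurve.
Variables (R : realType) (N0 N1 : cseq R -> \bar R).
Hypotheses (N1_szero : (N1 (szero R) <= 0)%E) (N0_hom : bss_homogeneous N0).
Variables (b : cseq R) (r : R).
Hypothesis N0b : N0 b = r%:E.

Lemma sumnorm_le_left x : (sumnorm N0 N1 x <= N0 x)%E.
Proof.
apply: ge_ereal_inf; exists (N0 x + N1 (szero R))%E.
  by exists x, (szero R); split => //; apply: funext => j; rewrite /sadd /szero addr0.
by rewrite -[leRHS]adde0 leeD2l.
Qed.

Lemma sumnorm_scale_le w : (sumnorm N0 N1 (sscale w b) <= (cmod w * `|r|)%:E)%E.
Proof.
apply: le_trans (sumnorm_le_left _) _.
by rewrite N0_hom N0b -EFinM lee_fin ler_wpM2l ?cmod_ge0 ?ler_norm.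
Qed.

Lemma sumnorm_scale_small w (e : R) : 0 <= e -> cmod w <= e / (`|r| + 1) ->
  (sumnorm N0 N1 (sscale w b) <= e%:E)%E.
Proof.
move=> e0 hw; apply: le_trans (sumnorm_scale_le w) _; rewrite lee_fin.
apply: (@le_trans _ _ (cmod w * (`|r| + 1))); first by rewrite ler_wpM2l ?cmod_ge0 ?lerDl.
by rewrite -ler_pdivlMr // ltr_pwDr.
Qed.

Lemma has_cderiv_scale c z d :
  is_cderiv c z d -> has_cderiv N0 N1 (fun z => sscale (c z) b) z (sscale d b).
Proof.
move=> cd e e0.
have [del del0 Hdel] := cd _ (divr_gt0 e0 (ltr_pwDr ltr01 (normr_ge0 r))).
exists del; split => // w hw.
have -> : dquot (fun z => sscale (c z) b) z w (sscale d b) =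
    sscale ((c w - c z) / (w - z) - d) b.
  by apply: funext => j; rewrite /dquot /sscale; ring.
by apply: sumnorm_scale_small (Hdel _ hw); rewrite ltW.
Qed.

Lemma calderon_scale c c' (M : R) :
  (forall z, is_cderiv c z (c' z)) -> (forall z, in_strip z -> cmod (c z) <= M) ->
  (calderon_norm N0 N1 (fun z => sscale (c z) b) < +oo)%E ->
  calderon N0 N1 (fun z => sscale (c z) b).
Proof.
move=> cd cM cfin; split => //.
- exists (M * `|r|) => z /cM hz; apply: le_trans (sumnorm_scale_le _) _.
  by rewrite lee_fin ler_wpM2r.
- move=> z _ e e0.
  have [del del0 Hdel] := is_cderiv_lipschitz (cd z).
  have K0 : 0 < (cmod (c' z) + 1) * (`|r| + 1).
    by rewrite mulr_gt0 // ltr_pwDr // cmod_ge0.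
  exists (Num.min del (e / ((cmod (c' z) + 1) * (`|r| + 1)))).
  split => [|w _]; first by rewrite lt_min del0 divr_gt0.
  rewrite lt_min => /andP[wdel we].
  have -> : ssub (sscale (c w) b) (sscale (c z) b) = sscale (c w - c z) b.
    by apply: funext => j; rewrite /ssub /sscale mulrBl.
  apply: sumnorm_scale_small; first exact: ltW.
  apply: le_trans (Hdel _ wdel) _.
  by rewrite ler_pdivlMr ?ltr_pwDr // mulrAC mulrC -ler_pdivlMr // ltW.
- move=> z _; exists (sscale (c' z) b); split; last exact: has_cderiv_scale.
  exact: le_lt_trans (sumnorm_scale_le _) (ltry _).
Qed.

End ScaledCurve.

Section BanachSequenceSpace.
Variables (R : realType) (N : cseq R -> \bar R).
Hypothesis hB : banach_seq_space N.

Lemma bss_eq0 x : N x = 0%E <-> x = szero R.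
Proof. by case: hB => h _; exact: h. Qed.

Lemma bss_hom : bss_homogeneous N.
Proof. by case: hB => _ [h _]. Qed.

Lemma bss_le_add x y : (N (sadd x y) <= N x + N y)%E.
Proof. by case: hB => _ [_ [h _]]; exact: h. Qed.

Lemma bss_mono x y : (forall j, cmod (x j) <= cmod (y j)) -> (N x <= N y)%E.
Proof. by case: hB => _ [_ [_ [h _]]]; exact: h. Qed.

Lemma bss_unit_lty k : (N (unit_vec R k) < +oo)%E.
Proof. by case: hB => _ [_ [_ [_ [h _]]]]; exact: h. Qed.

Lemma bss_ge0 x : (0 <= N x)%E.
Proof.
have <- : N (szero R) = 0%E by exact/bss_eq0.
by apply: bss_mono => j; rewrite /szero cmod0 cmod_ge0.
Qed.

Definition unit_norm j : R := fine (N (unit_vec R j)).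

Lemma unit_normE j : N (unit_vec R j) = (unit_norm j)%:E.
Proof. by rewrite /unit_norm fineK // ge0_fin_numE ?bss_ge0 ?bss_unit_lty. Qed.

Lemma unit_norm_gt0 j : 0 < unit_norm j.
Proof.
rewrite lt_neqAle fine_ge0 ?bss_ge0 // andbT eq_sym; apply/eqP => e0.
have : N (unit_vec R j) = 0%E by rewrite unit_normE e0.
move/bss_eq0/(congr1 (fun f => f j)); rewrite /unit_vec /szero eqxx.
by move/eqP; rewrite oner_eq0.
Qed.

Lemma coord_le_bss x j : ((cmod (x j) * unit_norm j)%:E <= N x)%E.
Proof.
rewrite EFinM -unit_normE -bss_hom; apply: bss_mono => i.
rewrite /sscale /unit_vec; case: eqP => [->|_]; rewrite ?mulr1 ?mulr0 ?cmod0 //.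
exact: cmod_ge0.
Qed.

Lemma coord_le_inv_unit_norm x j : (N x <= 1)%E -> cmod (x j) <= (unit_norm j)^-1.
Proof.
move=> Nx; have := le_trans (coord_le_bss x j) Nx.
by rewrite lee_fin -ler_pdivlMr ?unit_norm_gt0 // mul1r.
Qed.

Lemma bss_le_sum_coord n x : (forall j, (n <= j)%N -> x j = 0) ->
  (N x <= (\sum_(j < n) cmod (x j) * unit_norm j)%:E)%E.
Proof.
elim: n x => [|n IH] x hx.
  have -> : x = szero R by apply: funext => j; rewrite hx.
  by rewrite (proj2 (bss_eq0 _)) // big_ord0.
set x' := fun j => if j == n then 0 else x j.
rewrite {1}(_ : x = sadd x' (sscale (x n) (unit_vec R n))); last first.
  apply: funext => j; rewrite /sadd /sscale /unit_vec /x'.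
  by case: eqP => [->|_]; rewrite ?mulr1 ?mulr0 ?add0r ?addr0.
apply: le_trans (bss_le_add _ _) _; rewrite big_ord_recr /= EFinD; apply: leeD.
  apply: le_trans (IH x' _) _.
    move=> j nj; rewrite /x'; case: eqP => // /eqP jn; apply: hx.
    by rewrite ltn_neqAle nj eq_sym jn.
  rewrite lee_fin le_eqVlt; apply/orP; left; apply/eqP; apply: eq_bigr => j _.
  by rewrite /x' (ltn_eqF (ltn_ord j)).
by rewrite bss_hom unit_normE -EFinM.
Qed.

End BanachSequenceSpace.

Lemma lipschitz_continuous (K : realFieldType) (V : normedModType K)
    (g : V -> K) (L : K) :
  (forall v w, `|g v - g w| <= L * `|v - w|) -> continuous g.
Proof.
move=> gL v A /= /nbhs_ballP[e e0 hA].
have L1 : 0 < `|L| + 1 by rewrite ltr_pwDr.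
apply/nbhs_ballP; exists (e / (`|L| + 1)) => [|w]; first exact: divr_gt0.
rewrite -ball_normE /= => hw; apply: hA; rewrite -ball_normE /=.
apply: le_lt_trans (gL v w) _; apply: le_lt_trans (_ : _ <= (`|L| + 1) * `|v - w|) _.
  by rewrite ler_wpM2r // (le_trans (ler_norm L)) // lerDl.
by rewrite mulrC -ltr_pdivlMr.
Qed.

Definition l2_maximizer (R : realType) (N : cseq R -> \bar R) (F : set nat)
    (n : nat) (bs : cseq R) : Prop :=
  [/\ supported F bs, N bs = 1%E & forall b, supported F b -> N b = 1%E ->
    \sum_(j < n) cmod (b j) ^+ 2 <= \sum_(j < n) cmod (bs j) ^+ 2].

Section Extremal.
Variables (R : realType) (N : cseq R -> \bar R).
Hypothesis hB : banach_seq_space N.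
Variables (F : set nat) (n : nat).
Hypothesis hFn : forall j, F j -> (j < n)%N.

Local Notation m := (n + n).+1.

(* A sequence supported in [F] is coded by the real and imaginary parts of its
   first [n] entries; the last coordinate is unused and only makes [m] a
   successor, so that [inord] applies. *)
Definition seq_of_rV (v : 'rV[R]_m) : cseq R := fun j =>
  if j \in F then Complex (v ord0 (inord j)) (v ord0 (inord (n + j))) else 0.

Definition rV_of_seq (b : cseq R) : 'rV[R]_m := \row_(k < m)
  if (k < n)%N then complex.Re (b k)
  else if (k < n + n)%N then complex.Im (b (k - n)%N) else 0.

Lemma seq_of_rV_supported v : supported F (seq_of_rV v).
Proof. by move=> j nFj; rewrite /seq_of_rV memNset. Qed.

Lemma supported_out (b : cseq R) :
  supported F b -> forall j, (n <= j)%N -> b j = 0.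
Proof. by move=> sb j nj; apply: sb => /hFn; rewrite ltnNge nj. Qed.

Lemma seq_of_rVK (b : cseq R) : supported F b -> seq_of_rV (rV_of_seq b) = b.
Proof.
move=> sb; apply: funext => j; rewrite /seq_of_rV; case: ifPn => [/set_mem Fj|nFj].
  have jn := hFn Fj.
  have jm : (j < m)%N by rewrite ltnS (leq_trans (ltnW jn)) // leq_addr.
  have njm : (n + j < m)%N by rewrite ltnS leq_add2l ltnW.
  rewrite !mxE !inordK // jn ltnNge leq_addr /= ltn_add2l jn addKn.
  by case: (b j).
by rewrite sb // => Fj; move/negP: nFj; apply; exact: mem_set.
Qed.

Lemma seq_of_rVB v w j : seq_of_rV (v - w) j = seq_of_rV v j - seq_of_rV w j.
Proof. by rewrite /seq_of_rV; case: ifP => _; rewrite ?subr0 // !mxE. Qed.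

Lemma cmod_seq_of_rV_le v j : cmod (seq_of_rV v j) <= 2 * `|v|.
Proof.
have entry_le k : `|v ord0 k| <= `|v|.
  rewrite -[leRHS]/(mx_norm v) mx_normrE; apply/bigmax_geP; right => /=.
  by exists (ord0, k).
rewrite /seq_of_rV; case: ifP => _; last by rewrite cmod0 mulr_ge0.
apply: le_trans (cmod_le_normD _ _) _.
have := entry_le (inord j); have := entry_le (inord (n + j)); lra.
Qed.

Definition norm_seq_of_rV v : R := fine (N (seq_of_rV v)).

Lemma norm_seq_of_rVE v : N (seq_of_rV v) = (norm_seq_of_rV v)%:E.
Proof.
rewrite /norm_seq_of_rV fineK // ge0_fin_numE ?(bss_ge0 hB) //.
apply: le_lt_trans (bss_le_sum_coord hB (supported_out (seq_of_rV_supported v))) _.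
exact: ltry.
Qed.

Lemma norm_seq_of_rV_lipschitz v w :
  `|norm_seq_of_rV v - norm_seq_of_rV w| <=
    (\sum_(j < n) 2 * unit_norm N j) * `|v - w|.
Proof.
suff le_sub v1 v2 : norm_seq_of_rV v1 <=
    norm_seq_of_rV v2 + (\sum_(j < n) 2 * unit_norm N j) * `|v1 - v2|.
  have := le_sub v w; have := le_sub w v; rewrite distrC.
  by rewrite ler_norml => *; apply/andP; split; lra.
have split_v : seq_of_rV v1 = sadd (seq_of_rV v2) (seq_of_rV (v1 - v2)).
  by apply: funext => j; rewrite /sadd seq_of_rVB addrC subrK.
have diff_le : (N (seq_of_rV (v1 - v2)) <=
    ((\sum_(j < n) 2 * unit_norm N j) * `|v1 - v2|)%:E)%E.
  apply: le_trans (bss_le_sum_coord hB (supported_out (seq_of_rV_supported _))) _.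
  rewrite lee_fin mulr_suml; apply: ler_sum => j _.
  rewrite mulrAC ler_wpM2r ?cmod_seq_of_rV_le //.
  exact: ltW (unit_norm_gt0 hB j).
have := le_trans (bss_le_add hB _ _) (leeD (lexx (N (seq_of_rV v2))) diff_le).
by rewrite -split_v !norm_seq_of_rVE -EFinD lee_fin.
Qed.

Definition l2sq_seq_of_rV v : R := \sum_(j < n) cmod (seq_of_rV v j) ^+ 2.

Lemma l2sq_seq_of_rV_continuous : continuous l2sq_seq_of_rV.
Proof.
have -> : l2sq_seq_of_rV = fun v => \sum_(j < n) (if nat_of_ord j \in F then
    v ord0 (inord j) * v ord0 (inord j) +
    v ord0 (inord (n + j)) * v ord0 (inord (n + j)) else 0).
  apply: funext => v; apply: eq_bigr => j _; rewrite /seq_of_rV; case: ifP => _.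
    by rewrite cmodE sqr_sqrtr ?addr_ge0 ?sqr_ge0 // !expr2.
  by rewrite cmod0 expr0n.
apply: continuous_big; first exact: add_continuous.
move=> j _; case: (nat_of_ord j \in F); last exact: cst_continuous.
have cc k : continuous (fun v : 'rV[R]_m => v ord0 k).
  exact: (@coord_continuous R 1 m ord0 k).
exact: (fun v => cvgD (cvgM (cc _ v) (cc _ v)) (cvgM (cc _ v) (cc _ v))).
Qed.

Definition unit_sphere_rV : set 'rV[R]_m :=
  [set v | norm_seq_of_rV v = 1 /\ `|v| <= \sum_(j < n) (unit_norm N j)^-1].

Lemma unit_sphere_rV_compact : compact unit_sphere_rV.
Proof.
apply: bounded_closed_compact.
  rewrite /bounded_set /= /bounded_near; near=> r => v [_ hv]; apply: le_trans hv _.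
  by near: r; apply: nbhs_pinfty_ge; exact: num_real.
have -> : unit_sphere_rV = norm_seq_of_rV @^-1` [set 1] `&`
    (fun v : 'rV[R]_m => `|v|) @^-1` [set r | r <= \sum_(j < n) (unit_norm N j)^-1].
  by apply/seteqP; split => v [h1 h2]; split.
apply: closedI; apply: closed_comp.
- by move=> v _; exact: lipschitz_continuous norm_seq_of_rV_lipschitz v.
- exact: closed_eq.
- by move=> v _; exact: norm_continuous.
- exact: closed_le.
Unshelve. all: by end_near.
Qed.

Lemma rV_of_seq_unit_sphere b : supported F b -> N b = 1%E ->
  unit_sphere_rV (rV_of_seq b).
Proof.
move=> sb Nb; split; first by rewrite /norm_seq_of_rV seq_of_rVK // Nb.
have inv_ge0 j : 0 <= (unit_norm N j)^-1 by rewrite invr_ge0 ltW // (unit_norm_gt0 hB).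
have bound_ge0 : 0 <= \sum_(j < n) (unit_norm N j)^-1 by exact: sumr_ge0.
have coord_le k : (k < n)%N -> cmod (b k) <= \sum_(j < n) (unit_norm N j)^-1.
  move=> kn; apply: le_trans (coord_le_inv_unit_norm hB _ _) _; first by rewrite Nb.
  by rewrite (bigD1 (Ordinal kn)) //= lerDl sumr_ge0.
rewrite -[leLHS]/(mx_norm _) mx_normrE; apply/bigmax_leP; split=> // -[i k] _ /=.
rewrite (ord1 i) mxE.
case: ifPn => kn; first exact: le_trans (Re_le_cmod _) (coord_le _ kn).
case: ifPn => kn2; last by rewrite normr0.
apply: le_trans (Im_le_cmod _) (coord_le _ _).
by rewrite ltn_subLR // leqNgt.
Qed.

Lemma exists_l2_maximizer : F !=set0 -> exists bs, l2_maximizer N F n bs.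
Proof.
move=> [j0 Fj0].
have sphere_ne : unit_sphere_rV !=set0.
  exists (rV_of_seq (sscale (rC (unit_norm N j0)^-1) (unit_vec R j0))).
  apply: rV_of_seq_unit_sphere.
    move=> j nFj; rewrite /sscale /unit_vec.
    by case: eqP => [ej|]; [subst j | rewrite mulr0].
  rewrite (bss_hom hB) (unit_normE hB) cmod_rC -EFinM ger0_norm ?mulVf //.
    exact: lt0r_neq0 (unit_norm_gt0 hB j0).
  by rewrite invr_ge0 ltW // (unit_norm_gt0 hB).
have [c /set_mem [c1 _] cmax] := EVT_max_rV sphere_ne unit_sphere_rV_compact
  (continuous_subspaceT l2sq_seq_of_rV_continuous).
exists (seq_of_rV c); split; first exact: seq_of_rV_supported.
  by rewrite norm_seq_of_rVE c1.
move=> b sb Nb; have := cmax _ (mem_set (rV_of_seq_unit_sphere sb Nb)).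
by rewrite /l2sq_seq_of_rV seq_of_rVK.
Qed.

End Extremal.

Lemma nneseries_finite (R : realType) (u : nat -> \bar R) n :
  (forall j, (0 <= u j)%E) -> (forall j, (n <= j)%N -> u j = 0%E) ->
  (\sum_(0 <= j <oo) u j = \sum_(j < n) u j)%E.
Proof.
move=> u0 hu; rewrite (nneseries_split 0 n) // add0n eseries0 ?adde0 ?big_mkord //.
by move=> i ni _; exact: hu.
Qed.

Lemma l2norm_finite (R : realType) n (x : cseq R) :
  (forall j, (n <= j)%N -> x j = 0) ->
  l2norm x = (Num.sqrt (\sum_(j < n) cmod (x j) ^+ 2))%:E.
Proof.
move=> hx; rewrite /l2norm (@nneseries_finite _ _ n).
- by rewrite sumEFin.
- by move=> j; rewrite lee_fin sqr_ge0.
- by move=> j nj; rewrite hx // cmod0 expr0n.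
Qed.

Lemma kdual_szero (R : realType) (N : cseq R -> \bar R) : (kdual N (szero R) <= 0)%E.
Proof.
apply: ge_ereal_sup => _ [x _ <-].
by rewrite eseries0 // => i _ _; rewrite /szero cmod0 mulr0.
Qed.

Section Maximizer.
Variables (R : realType) (N : cseq R -> \bar R).
Hypothesis hB : banach_seq_space N.
Variables (F : set nat) (n : nat).
Hypothesis hFn : forall j, F j -> (j < n)%N.
Variable bs : cseq R.
Hypothesis hbs : l2_maximizer N F n bs.

Let sbs : supported F bs. Proof. by case: hbs. Qed.
Let Nbs : N bs = 1%E. Proof. by case: hbs. Qed.
Let bs_max : forall b, supported F b -> N b = 1%E ->
  \sum_(j < n) cmod (b j) ^+ 2 <= \sum_(j < n) cmod (bs j) ^+ 2.
Proof. by case: hbs. Qed.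

Local Notation k2 := (\sum_(j < n) cmod (bs j) ^+ 2).

Lemma l2sq_le_maximizer y (s : R) : supported F y -> N y = s%:E ->
  \sum_(j < n) cmod (y j) ^+ 2 <= s ^+ 2 * k2.
Proof.
move=> sy Ny.
have s0 : 0 <= s by rewrite -lee_fin -Ny (bss_ge0 hB).
have [s_eq0|sn0] := eqVneq s 0.
  have -> : y = szero R by apply/(bss_eq0 hB); rewrite Ny s_eq0.
  by rewrite s_eq0 big1 ?expr0n ?mul0r // => j _; rewrite /szero cmod0 expr0n.
have s0' : 0 < s by rewrite lt_neqAle eq_sym sn0 s0.
have := bs_max (b := sscale (rC s^-1) y) _ _.
rewrite /sscale; under eq_bigr => j _ do rewrite cmodM cmod_rC exprMn.
rewrite -mulr_sumr ger0_norm ?invr_ge0 // exprVn -ler_pdivlMl; last first.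
  by rewrite invr_gt0 exprn_gt0.
rewrite invrK; apply.
- by move=> j nFj; rewrite sy // mulr0.
- by rewrite (bss_hom hB) Ny cmod_rC -EFinM ger0_norm ?invr_ge0 // mulVf.
Qed.

Lemma coord_product_le x : (N x <= 1)%E ->
  \sum_(j < n) cmod (x j) * cmod (bs j) <= k2.
Proof.
move=> Nx; set xF : cseq R := fun j => if j \in F then x j else 0.
have NxF : (N xF <= 1)%E.
  apply: le_trans Nx; apply: (bss_mono hB) => j; rewrite /xF.
  by case: ifP => _; rewrite ?cmod0 ?cmod_ge0.
have sxF : supported F xF by move=> j nFj; rewrite /xF memNset.
have -> : \sum_(j < n) cmod (x j) * cmod (bs j) =
    \sum_(j < n) cmod (xF j) * cmod (bs j).
  apply: eq_bigr => j _; rewrite /xF; case: ifPn => // /negP nFj.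
  by rewrite sbs ?cmod0 ?mulr0 // => Fj; apply: nFj; exact: mem_set.
have xF_le : \sum_(j < n) cmod (xF j) ^+ 2 <= k2.
  have NxFE : N xF = (fine (N xF))%:E.
    by rewrite fineK // ge0_fin_numE ?(bss_ge0 hB) // (le_lt_trans NxF) ?ltry.
  apply: le_trans (l2sq_le_maximizer sxF NxFE) _; apply: ler_piMl.
    by apply: sumr_ge0 => j _; exact: sqr_ge0.
  have s0 : 0 <= fine (N xF) by rewrite fine_ge0 // (bss_ge0 hB).
  have s1 : fine (N xF) <= 1 by rewrite -lee_fin -NxFE.
  by rewrite expr_le1.
(* AM-GM, term by term *)
apply: (@le_trans _ _ (\sum_(j < n) (cmod (xF j) ^+ 2 + cmod (bs j) ^+ 2) / 2)).
  apply: ler_sum => j _; have := sqr_ge0 (cmod (xF j) - cmod (bs j)).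
  rewrite sqrrB mulr2n; lra.
rewrite -mulr_suml big_split /=; lra.
Qed.

Lemma kdual_scale_le w : (kdual N (sscale w bs) <= (cmod w * k2)%:E)%E.
Proof.
apply: ge_ereal_sup => _ [x Nx <-].
rewrite (@nneseries_finite _ _ n).
- rewrite sumEFin lee_fin /sscale.
  under eq_bigr => j _ do rewrite cmodM mulrCA.
  by rewrite -mulr_sumr ler_wpM2l ?cmod_ge0 ?coord_product_le.
- by move=> j; rewrite lee_fin mulr_ge0 // cmod_ge0.
- by move=> j nj; rewrite /sscale (supported_out hFn sbs nj) mulr0 cmod0 mulr0.
Qed.

Lemma kappa_maximizer : kappa N F = Num.sqrt k2.
Proof.
have l2E (b : cseq R) :
    supported F b -> l2norm b = (Num.sqrt (\sum_(j < n) cmod (b j) ^+ 2))%:E.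
  by move=> sb; apply: l2norm_finite => j nj; rewrite (supported_out hFn sb nj).
rewrite /kappa (_ : ereal_sup _ = (Num.sqrt k2)%:E) //.
apply: le_anti; apply/andP; split.
  apply: ge_ereal_sup => _ [b [Nb sb] <-].
  by rewrite l2E // lee_fin ler_sqrt ?bs_max // sumr_ge0 // => j _; exact: sqr_ge0.
by apply: ereal_sup_ubound; exists bs => //; rewrite l2E.
Qed.

Lemma maximizer_neq0 : bs <> szero R.
Proof. by move/(bss_eq0 hB); rewrite Nbs => /eqP; rewrite eqe oner_eq0. Qed.

Lemma maximizer_l2sq_gt0 : 0 < k2.
Proof.
rewrite lt_neqAle sumr_ge0 ?andbT => [|j _]; last exact: sqr_ge0.
rewrite eq_sym; apply/eqP => k0; apply: maximizer_neq0; apply: funext => j.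
have [jn|nj] := ltnP j n; last by rewrite (supported_out hFn sbs nj).
have := @psumr_eq0P _ _ xpredT (fun i : 'I_n => cmod (bs i) ^+ 2)
  (fun i _ => sqr_ge0 _) k0 (Ordinal jn) isT.
by move=> /= /eqP; rewrite sqrf_eq0 => /eqP /cmod_eq0.
Qed.

Local Notation kap := (Num.sqrt k2).
Local Notation a := (ln kap).

Definition extremal_curve (z : cplx R) : cseq R :=
  sscale (cexp (rC (- (2 * a)) * (z - rC 2^-1))) bs.

Lemma cmod_extremal_factor z :
  cmod (cexp (rC (- (2 * a)) * (z - rC 2^-1))) =
  expR (- (2 * a) * (complex.Re z - 2^-1)).
Proof. by rewrite cmod_cexp Re_rCM; case: z. Qed.

Lemma extremal_curve_half : extremal_curve (rC 2^-1) = bs.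
Proof.
by apply: funext => j; rewrite /extremal_curve /sscale subrr mulr0 cexp0 mul1r.
Qed.

Lemma calderon_norm_extremal_curve : calderon_norm N (kdual N) extremal_curve = kap%:E.
Proof.
have kap0 : 0 < kap by rewrite sqrtr_gt0 maximizer_l2sq_gt0.
have expa : expR a = kap by rewrite lnK // posrE.
have left_edge t : N (extremal_curve (Complex 0 t)) = kap%:E.
  rewrite (bss_hom hB) Nbs mule1 cmod_extremal_factor /= sub0r mulrNN.
  by rewrite mulrAC divff // mul1r expa.
rewrite /calderon_norm.
have -> : ereal_sup [set N (extremal_curve (Complex 0 t)) | t in [set: R]] = kap%:E.
  apply: le_anti; apply/andP; split.
    by apply: ge_ereal_sup => _ [t _ <-]; rewrite left_edge.
  by apply: ereal_sup_ubound; exists 0 => //; rewrite left_edge.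
rewrite max_l //; apply: ge_ereal_sup => _ [t _ <-].
apply: le_trans (kdual_scale_le _) _; rewrite cmod_extremal_factor /=.
rewrite (_ : - (2 * a) * (1 - 2^-1) = - a) ?expRN ?expa; last by field.
have k2E : k2 = kap * kap.
  by rewrite -expr2 sqr_sqrtr // sumr_ge0 // => j _; exact: sqr_ge0.
set s := kap in kap0 k2E *.
by rewrite k2E mulKf // gt_eqF.
Qed.

Lemma extremal_curve_calderon : calderon N (kdual N) extremal_curve.
Proof.
apply: (calderon_scale (kdual_szero N) (bss_hom hB) Nbs
  (fun z => is_cderiv_cexp_affine _ (rC 2^-1) z) (M := expR `|a|)).
- move=> z /in_strip_Re z01; rewrite cmod_extremal_factor ler_expR.
  exact: strip_exponent_le.
- by rewrite calderon_norm_extremal_curve ltry.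
Qed.

Lemma extremal_curve_deriv : has_cderiv N (kdual N) extremal_curve (rC 2^-1)
  (fun j => - rC 2 * rC a * bs j).
Proof.
have -> : - rC 2 * rC a = rC (- (2 * a)).
  apply/eqP; rewrite eq_complex /= oppr0 !(mulr0, mul0r) subr0 addr0 mulNr.
  by rewrite !eqxx.
have := has_cderiv_scale (kdual_szero N) (bss_hom hB) Nbs
  (is_cderiv_cexp_affine (rC (- (2 * a))) (rC 2^-1) (rC 2^-1)).
by rewrite subrr mulr0 cexp0 mulr1.
Qed.

End Maximizer.

Theorem proposition3p3 (R : realType) (N : cseq R -> \bar R)
  (hB : banach_seq_space N)
  (hl2 : forall x : cseq R, interp_norm N (kdual N) (2^-1) x = l2norm x)
  (F : set nat) (hFfin : finite_set F) (hFne : F !=set0) :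
  exists bs : cseq R,
    [/\ supported F bs, bs <> szero R &
      (* Omega(bs) computed from an optimal (norm-attaining) extremal
         S(bs) = f in F_infty(B, dual B) with f(1/2) = bs *)
      (exists f : cplx R -> cseq R,
        [/\ calderon N (kdual N) f,
            f (rC (2^-1)) = bs,
            calderon_norm N (kdual N) f = interp_norm N (kdual N) (2^-1) bs &
            has_cderiv N (kdual N) f (rC (2^-1))
              (fun j => - (rC 2) * rC (ln (kappa N F)) * bs j)])].
Proof.
have [n hFn] : exists n, forall j, F j -> (j < n)%N.
  move/finite_seqP: hFfin => [s Fs]; exists (\max_(x <- s) x).+1 => j.
  by rewrite Fs /= => js; rewrite ltnS (@leq_bigmax_seq _ s xpredT id j).
have [bs hbs] := exists_l2_maximizer hB hFn hFne.
have [sbs _ _] := hbs.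
exists bs; split; [exact: sbs | exact (maximizer_neq0 hB hbs) |].
exists (extremal_curve n bs); split.
- exact (extremal_curve_calderon hB hFn hbs).
- exact: extremal_curve_half.
- rewrite hl2 (l2norm_finite (supported_out hFn sbs)).
  exact (calderon_norm_extremal_curve hB hFn hbs).
- rewrite (kappa_maximizer hFn hbs).
  exact (extremal_curve_deriv hB hbs).
Qed.
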